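(* Let $n\ge1$ and let $(\rho,\alpha)$ satisfy either $\alpha\in(1,2)$ and $0\le\rho\le\frac{1-\theta(\alpha)}{1+\theta(\alpha)}$, or $\alpha\in[2,3]$ and $0\le\rho\le1$. Then $\mathbf{MaxStab}_\alpha(\tfrac12)$ is attained by dictator functions, i.e. for every $f:\{-1,1\}^n\to\{0,1\}$ with $\mathbb Ef(\mathbf X)=\tfrac12$, $\mathbb E[\Phi_\alpha(T_\rho f(\mathbf X))]\le\tfrac12\Phi_\alpha(\tfrac{1+\rho}{2})+\tfrac12\Phi_\alpha(\tfrac{1-\rho}{2})$.
   Context: $\mathbf X$ uniform on $\{-1,1\}^n$; $\mathbf Y$ obtained by independently flipping each coordinate of $\mathbf X$ with probability $(1-\rho)/2$; $T_\rho f(\mathbf x)=\mathbb E[f(\mathbf Y)\mid\mathbf X=\mathbf x]$. For $\alpha>1$, $\Phi_\alpha(t)=t\cdot\frac{t^{\alpha-1}-1}{\alpha-1}$ on $[0,1]$. $\mathbf{MaxStab}_\alpha(a)$ is the maximum of $\mathbb E[\Phi_\alpha(T_\rho f(\mathbf X))]$ over Boolean $f$ with $\mathbb Ef(\mathbf X)=a$. Dictator functions are $1\{x_k=1\}$, $1\{x_k=-1\}$. For $\alpha\in(1,2)$, $\theta(\alpha)$ is the unique solution $\theta\in(0,1)$ of $\theta^{2-\alpha}+\frac1\alpha(1-\theta)=1$. *)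

From HB Require Import structures.
From mathcomp Require Import all_boot all_order all_algebra.
From mathcomp Require Import all_classical all_reals all_analysis.
Set Implicit Arguments. Unset Strict Implicit. Unset Printing Implicit Defensive.
Import Order.TTheory GRing.Theory Num.Theory.
Local Open Scope ring_scope.

(* The Boolean cube {-1,1}^n, coordinates encoded as bool (true = +1). *)
Definition cube (n : nat) := {ffun 'I_n -> bool}.

Definition Eunif (R : realType) (n : nat) (g : cube n -> R) : R :=
  (2 ^+ n)^-1 * \sum_(x : cube n) g x.

Definition bval (R : realType) (b : bool) : R := (b : nat)%:R.

(* P[Y = y | X = x]: each coordinate flipped independently w.p. (1-rho)/2. *)
Definition noise_kernel (R : realType) (n : nat) (rho : R) (x y : cube n) : R :=
  \prod_(i < n) (if y i == x i then (1 + rho) / 2 else (1 - rho) / 2).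

Definition T_rho (R : realType) (n : nat) (rho : R) (f : cube n -> bool)
  (x : cube n) : R :=
  \sum_(y : cube n) noise_kernel rho x y * bval R (f y).

Definition Phi (R : realType) (alpha t : R) : R :=
  t * ((t `^ (alpha - 1)) - 1) / (alpha - 1).

Definition is_theta (R : realType) (alpha theta : R) : Prop :=
  0 < theta < 1 /\ theta `^ (2 - alpha) + (1 - theta) / alpha = 1.

From HB Require Import structures.
From mathcomp Require Import all_boot all_order all_algebra.
From mathcomp Require Import all_classical all_reals all_analysis.
From mathcomp Require Import ring lra.
Set Implicit Arguments. Unset Strict Implicit. Unset Printing Implicit Defensive.
Import Order.TTheory GRing.Theory Num.Theory.
Local Open Scope ring_scope.

(* Write p = (1 + rho)/2, q = (1 - rho)/2 and g = T_rho f for a balanced f.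
   1. Fourier analysis on the cube (section Fourier): T_rho is diagonal in the
      Walsh characters with eigenvalues rho^|S|.  Hence, for c >= 0 and
      c rho + D >= 0, the quadratic functional c E[g^2] + D E[f g] is
      maximised by dictators (spectral_bound).
   2. A general dictator bound (dictator_bound): if phi has, on [0, 1],
      quadratic majorants of curvature c at p and at q with slopes dp and dq
      such that c rho <= dp - dq, then E[phi g] <= (phi p + phi q)/2.  Indeed,
      majorising phi (g x) around p where f x = 1 and around q where f x = 0
      gives an expression affine in f, g and c g^2 + D f g, to which step 1
      applies.
   3. Inequalities for real powers (section PowerInequalities) provide such
      majorants for t^alpha: the curvature (alpha-1) q^(alpha-2) when
      1 < alpha < 2 (weighted AM-GM; the slope condition is where theta
      enters, via concavity of y^(2-alpha)), and alpha(alpha-1)/2 when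
      2 <= alpha <= 3 (second-order Taylor; the slope condition uses
      alpha <= 3).
   4. Since Phi_alpha t = (t^alpha - t)/(alpha - 1), the majorants transfer
      to Phi_alpha, and dictator_bound gives the theorem. *)

Section Fourier.
Variables (R : realType) (n : nat).
Implicit Types (x y z S : cube n) (r : R) (h u v : cube n -> R).

Definition sgn (b : bool) : R := if b then 1 else -1.

(* The Walsh character chi_S(x) = prod_(i in S) x_i; subsets S of the
   coordinates are encoded as points of the cube. *)
Definition character S x : R := \prod_(i < n) (if S i then sgn (x i) else 1).

Definition eigen r S : R := \prod_(i < n) (if S i then r else 1).

(* The (unnormalised) Fourier coefficient of h at S. *)
Definition fourier S h : R := \sum_x h x * character S x.

(* The noise operator on real functions; T_rho r f is noise r (bval \o f). *)
Definition noise r h x : R := \sum_y noise_kernel r x y * h y.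

Definition emptyS : cube n := [ffun => false].

Lemma sum_cube_prod (F : 'I_n -> bool -> R) :
  \sum_(x : cube n) \prod_(i < n) F i (x i) = \prod_(i < n) (F i true + F i false).
Proof.
have <- := bigA_distr_bigA F.
by apply: eq_bigr => i _; rewrite big_bool.
Qed.

Lemma noise_kernel_sym r x y : noise_kernel r x y = noise_kernel r y x.
Proof. by apply: eq_bigr => i _; rewrite eq_sym. Qed.

Lemma noise_kernel_row_sum r x : \sum_y noise_kernel r x y = 1.
Proof.
rewrite /noise_kernel (sum_cube_prod (fun i b =>
  if b == x i then (1 + r) / 2 else (1 - r) / 2)).
by rewrite big1 // => i _; case: (x i) => /=; field.
Qed.

Lemma noise_kernel_comp r y z :
  \sum_x noise_kernel r y x * noise_kernel r x z = noise_kernel (r * r) y z.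
Proof.
rewrite /noise_kernel.
under eq_bigr => x _ do rewrite -big_split /=.
rewrite (sum_cube_prod (fun i b =>
  (if b == y i then (1 + r) / 2 else (1 - r) / 2) *
  (if z i == b then (1 + r) / 2 else (1 - r) / 2))).
by apply: eq_bigr => i _; case: (y i); case: (z i) => /=; field.
Qed.

Lemma noise_kernel_one x h : \sum_y noise_kernel 1 x y * h y = h x.
Proof.
rewrite (bigD1 x) //= big1 ?addr0.
  rewrite [noise_kernel _ _ _]big1 ?mul1r // => i _.
  by rewrite eqxx; field.
move=> y yx; have [i yi] : exists i, y i != x i.
  apply/existsP; apply: contraR yx => /existsPn yx.
  by apply/eqP/ffunP => i; move/negPn/eqP: (yx i).
by rewrite /noise_kernel (bigD1 i) //= (negbTE yi) subrr !mul0r.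
Qed.

Lemma noise_kernel_fourier r x y :
  noise_kernel r x y =
    (2 ^+ n)^-1 * \sum_S eigen r S * character S x * character S y.
Proof.
have factor (a b : bool) :
    (if b == a then (1 + r) / 2 else (1 - r) / 2) = (1 + r * sgn a * sgn b) / 2.
  by case: a; case: b => /=; rewrite /sgn; field.
rewrite /noise_kernel; under eq_bigr => i _ do rewrite factor.
rewrite big_split /= prodr_const card_ord exprVn mulrC; congr (_ * _).
transitivity (\prod_(i < n) \sum_(b : bool)
    (if b then r * sgn (x i) * sgn (y i) else 1)).
  by apply: eq_bigr => i _; rewrite big_bool addrC.
rewrite bigA_distr_bigA; apply: eq_bigr => S _.
rewrite /eigen /character -!big_split /=; apply: eq_bigr => i _.
by case: (S i); rewrite ?mulr1 ?mulrA.
Qed.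

Lemma noise_form_fourier r u v :
  \sum_x \sum_y u x * noise_kernel r x y * v y =
    (2 ^+ n)^-1 * \sum_S eigen r S * fourier S u * fourier S v.
Proof.
transitivity (\sum_x \sum_y \sum_S (2 ^+ n)^-1 *
    (eigen r S * (u x * character S x) * (v y * character S y))).
  apply: eq_bigr => x _; apply: eq_bigr => y _.
  rewrite noise_kernel_fourier mulr_sumr mulr_sumr mulr_suml.
  by apply: eq_bigr => S _; ring.
under eq_bigr => x _ do rewrite exchange_big /=.
rewrite exchange_big mulr_sumr /=; apply: eq_bigr => S _.
rewrite /fourier -mulrA mulr_suml !mulr_sumr; apply: eq_bigr => x _.
rewrite !mulr_sumr; apply: eq_bigr => y _.
ring.
Qed.

(* Parseval: sum_S (h^_S)^2 = 2^n sum_x h(x)^2, from the case r = 1. *)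
Lemma parseval h : \sum_S fourier S h ^+ 2 = 2 ^+ n * \sum_x h x ^+ 2.
Proof.
have N0 : (2 : R) ^+ n != 0 by rewrite expf_neq0 // pnatr_eq0.
have := noise_form_fourier 1 h h.
have -> : \sum_x \sum_y h x * noise_kernel 1 x y * h y = \sum_x h x ^+ 2.
  apply: eq_bigr => x _; rewrite expr2 -[X in _ = _ * X](noise_kernel_one x h) mulr_sumr.
  by apply: eq_bigr => y _; rewrite mulrA.
have -> : \sum_S eigen 1 S * fourier S h * fourier S h = \sum_S fourier S h ^+ 2.
  apply: eq_bigr => S _; rewrite -mulrA -expr2 [eigen _ _]big1 ?mul1r //.
  by move=> i _; case: (S i).
by move=> ->; rewrite mulrA mulfV // mul1r.
Qed.

Lemma noise_sum r h : \sum_x noise r h x = \sum_x h x.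
Proof.
rewrite /noise exchange_big /=; apply: eq_bigr => y _.
rewrite -mulr_suml; under eq_bigr => x _ do rewrite noise_kernel_sym.
by rewrite noise_kernel_row_sum mul1r.
Qed.

Lemma noise_unit r h x : 0 <= r <= 1 -> (forall y, 0 <= h y <= 1) ->
  0 <= noise r h x <= 1.
Proof.
move=> /andP[r0 r1] h01.
have K0 y : 0 <= noise_kernel r x y.
  by apply: prodr_ge0 => i _; case: (_ == _); apply: divr_ge0; lra.
apply/andP; split.
  by apply: sumr_ge0 => y _; apply: mulr_ge0 => //; case/andP: (h01 y).
rewrite -(noise_kernel_row_sum r x); apply: ler_sum => y _.
by rewrite ler_piMr //; case/andP: (h01 y).
Qed.

Lemma noise_sqr_sum r h :
  \sum_x noise r h x ^+ 2 = \sum_y \sum_z h y * noise_kernel (r * r) y z * h z.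
Proof.
under eq_bigr => x _ do rewrite expr2 mulr_suml.
under eq_bigr => x _ do under eq_bigr => y _ do rewrite mulr_sumr.
rewrite exchange_big /=; apply: eq_bigr => y _.
rewrite exchange_big /=; apply: eq_bigr => z _.
rewrite -noise_kernel_comp mulr_sumr mulr_suml; apply: eq_bigr => x _.
by rewrite (noise_kernel_sym r x y); ring.
Qed.

Lemma eigen_sqr r S : eigen (r * r) S = eigen r S ^+ 2.
Proof.
rewrite expr2 /eigen -big_split /=.
by apply: eq_bigr => i _; case: (S i); rewrite ?mulr1.
Qed.

Lemma eigen_empty r : eigen r emptyS = 1.
Proof. by rewrite /eigen big1 // => i _; rewrite ffunE. Qed.

Lemma eigen_bound r S : 0 <= r <= 1 -> S != emptyS -> 0 <= eigen r S <= r.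
Proof.
move=> /andP[r0 r1] SN.
have [i Si] : exists i, S i.
  apply/existsP; apply: contraR SN => /existsPn S0.
  by apply/eqP/ffunP => i; rewrite ffunE; apply/negbTE.
rewrite /eigen (bigD1 i) //= Si.
have /andP[p0 p1] : 0 <= \prod_(j < n | j != i) (if S j then r else 1) <= 1.
  apply/andP; split; first by apply: prodr_ge0 => j _; case: (S j).
  by apply: prodr_ile1 => j _; case: (S j) => //; apply/andP.
by rewrite mulr_ge0 //= ler_piMr.
Qed.

Lemma fourier_empty h : fourier emptyS h = \sum_x h x.
Proof.
apply: eq_bigr => x _.
by rewrite /character big1 ?mulr1 // => i _; rewrite ffunE.
Qed.

Lemma balanced_fourier_mass h :
  (forall x, h x ^+ 2 = h x) -> \sum_x h x = 2 ^+ n / 2 ->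
  \sum_(S | S != emptyS) fourier S h ^+ 2 = 2 ^+ n * 2 ^+ n / 4.
Proof.
move=> hbool hmean.
have := parseval h; rewrite (bigD1 emptyS) //= fourier_empty hmean.
under [\sum_x _]eq_bigr => x _ do rewrite hbool.
by rewrite hmean => /(canRL (addKr _)) ->; field.
Qed.

Lemma quadratic_max_at_end (c D l r : R) : 0 <= c -> 0 <= c * r + D ->
  0 <= l <= r -> c * l ^+ 2 + D * l <= c * r ^+ 2 + D * r.
Proof.
move=> c0 cD /andP[l0 lr].
have : 0 <= (r - l) * (c * (r + l) + D) by apply: mulr_ge0; nra.
nra.
Qed.

(* Spectral bound: for a balanced Boolean h, the quadratic functional
   c ||T_r h||^2 + D <h, T_r h> is at most its value on a dictator. *)
Lemma spectral_bound (r c D : R) h :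
  0 <= r <= 1 -> 0 <= c -> 0 <= c * r + D ->
  (forall x, h x ^+ 2 = h x) -> \sum_x h x = 2 ^+ n / 2 ->
  c * \sum_x noise r h x ^+ 2 + D * \sum_x h x * noise r h x
    <= 2 ^+ n * (c * (1 + r ^+ 2) / 4 + D * (1 + r) / 4).
Proof.
move=> r01 c0 cD hbool hmean.
set N : R := 2 ^+ n; have N0 : 0 < N by rewrite exprn_gt0.
pose w S := c * eigen r S ^+ 2 + D * eigen r S.
have -> : c * \sum_x noise r h x ^+ 2 + D * \sum_x h x * noise r h x =
    N^-1 * \sum_S w S * fourier S h ^+ 2.
  rewrite noise_sqr_sum noise_form_fourier.
  have -> : \sum_x h x * noise r h x = \sum_x \sum_y h x * noise_kernel r x y * h y.
    by apply: eq_bigr => x _; rewrite mulr_sumr; apply: eq_bigr => y _; rewrite mulrA.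
  rewrite noise_form_fourier mulrCA [D * _]mulrCA -mulrDr.
  rewrite [c * _]mulr_sumr [D * _]mulr_sumr -big_split /=; congr (_ * _).
  by apply: eq_bigr => S _; rewrite eigen_sqr /w; ring.
have wS S : S != emptyS -> w S * fourier S h ^+ 2 <=
    (c * r ^+ 2 + D * r) * fourier S h ^+ 2.
  move=> SN; rewrite ler_wpM2r ?sqr_ge0 //.
  by apply: quadratic_max_at_end => //; apply: eigen_bound.
have mass : \sum_(S | S != emptyS) w S * fourier S h ^+ 2 <=
    (c * r ^+ 2 + D * r) * (N * N / 4).
  by rewrite -(balanced_fourier_mass hbool hmean) mulr_sumr; apply: ler_sum.
have w0 : w emptyS = c + D by rewrite /w eigen_empty; ring.
rewrite (bigD1 emptyS) //= w0 fourier_empty hmean.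
rewrite -(ler_pM2l N0) mulrA mulfV ?gt_eqF // mul1r.
apply: le_trans (lerD (lexx _) mass) _.
by rewrite /N le_eqVlt; apply/orP; left; apply/eqP; field.
Qed.

End Fourier.

Definition quad_majorant (R : realType) (phi : R -> R) (t0 slope c : R) : Prop :=
  forall t, 0 <= t <= 1 -> phi t <= phi t0 + slope * (t - t0) + c * (t - t0) ^+ 2.

Section DictatorBound.
Variables (R : realType) (n : nat).

Lemma balanced_sum (f : cube n -> bool) :
  Eunif (fun x => bval R (f x)) = 1 / 2 -> \sum_x bval R (f x) = 2 ^+ n / 2.
Proof.
have N0 : (2 : R) ^+ n != 0 by rewrite expf_neq0 // pnatr_eq0.
by rewrite /Eunif => /(canRL (mulKf (invr_neq0 N0))); rewrite invrK => ->; field.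
Qed.

(* Majorise phi (T_rho f)
   around (1+rho)/2 where f = 1 and around (1-rho)/2 where f = 0; the
   majorant is affine in f, T_rho f and c (T_rho f)^2 + D f T_rho f, whose
   average is controlled by spectral_bound as soon as c rho <= dp - dq. *)
Lemma dictator_bound (phi : R -> R) (rho c dp dq : R) (f : cube n -> bool) :
  0 <= rho <= 1 -> 0 <= c -> c * rho <= dp - dq ->
  quad_majorant phi ((1 + rho) / 2) dp c ->
  quad_majorant phi ((1 - rho) / 2) dq c ->
  Eunif (fun x => bval R (f x)) = 1 / 2 ->
  Eunif (fun x => phi (T_rho rho f x))
    <= 1 / 2 * phi ((1 + rho) / 2) + 1 / 2 * phi ((1 - rho) / 2).
Proof.
move=> rho01 c0 gap maj_p maj_q hmean.
set p := (1 + rho) / 2; set q := (1 - rho) / 2.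
pose h x := bval R (f x); pose g x := noise rho h x.
have hsum : \sum_x h x = 2 ^+ n / 2 := balanced_sum hmean.
have hbool x : h x ^+ 2 = h x by rewrite /h /bval; case: (f x); rewrite ?expr1n ?expr0n.
have g01 x : 0 <= g x <= 1.
  by apply: noise_unit => // y; rewrite /h /bval; case: (f y) => /=; rewrite ler01 lexx.
set A := phi q - dq * q + c * q ^+ 2; set B := dq - 2 * c * q.
set K := phi p - dp * p + c * p ^+ 2 - A; set D := dp - dq - 2 * c * rho.
have pointwise x :
    phi (g x) <= A + B * g x + (c * g x ^+ 2 + D * (h x * g x)) + K * h x.
  have -> : A + B * g x + (c * g x ^+ 2 + D * (h x * g x)) + K * h x =
      if f x then phi p + dp * (g x - p) + c * (g x - p) ^+ 2
      else phi q + dq * (g x - q) + c * (g x - q) ^+ 2.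
    by rewrite /h /bval /K /A /B /D /p /q; case: (f x) => /=; field.
  by case: (f x); [apply: maj_p | apply: maj_q]; apply: g01.
have cD : 0 <= c * rho + D by rewrite /D; lra.
have spectral := spectral_bound rho01 c0 cD hbool hsum.
have gsum : \sum_x g x = 2 ^+ n / 2 by rewrite noise_sum.
have sum_affine a b d k :
    \sum_x (a + b * g x + (c * g x ^+ 2 + d * (h x * g x)) + k * h x) =
    2 ^+ n * a + b * \sum_x g x + (c * \sum_x g x ^+ 2 + d * \sum_x h x * g x)
    + k * \sum_x h x.
  rewrite !big_split /= -!mulr_sumr sumr_const card_ffun card_bool card_ord.
  by rewrite -natrX mulr_natl.
have total : \sum_x phi (g x) <= 2 ^+ n * (phi p / 2 + phi q / 2).
  apply: le_trans (ler_sum _ (fun x _ => pointwise x)) _.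
  rewrite sum_affine gsum hsum.
  apply: le_trans (lerD (lerD (lexx _) spectral) (lexx _)) _.
  by rewrite /K /A /B /D /p /q le_eqVlt; apply/orP; left; apply/eqP; field.
have N0 : (2 : R) ^+ n != 0 by rewrite expf_neq0 // pnatr_eq0.
apply: le_trans (ler_wpM2l _ total) _; first by rewrite invr_ge0 exprn_ge0.
by rewrite mulrA mulVf // le_eqVlt; apply/orP; left; apply/eqP; field.
Qed.

End DictatorBound.

Section PowerInequalities.
Variable R : realType.
Implicit Types a b e g k p q s t u y : R.

Lemma is_derive_powR e y : 0 < y -> is_derive y 1 (fun z => z `^ e) (e * y `^ (e - 1)).
Proof.
move=> y0; have yi : y \in `]0, +oo[ by rewrite in_itv /= y0.
have := derivableP (@derivable_powR R 1 e y yi).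
by rewrite -derive1E powR_derive1.
Qed.

Lemma is_derive_quad_powR a b k e y : 0 < y ->
  is_derive y 1 (fun z => a * z + b * z ^+ 2 + k * z `^ e)
    (a + b * (2 * y) + k * (e * y `^ (e - 1))).
Proof.
move=> y0.
have lin : is_derive y 1 (fun z : R => a * z) a.
  have -> : (fun z : R => a * z) = a \*: @id R by apply/funext.
  by apply: is_derive_eq; rewrite /GRing.scale /= mulr1.
have sqr : is_derive y 1 (fun z : R => b * z ^+ 2) (b * (2 * y)).
  have -> : (fun z : R => b * z ^+ 2) = b \*: (@id R ^+ 2) by apply/funext.
  by apply: is_derive_eq; rewrite /GRing.scale /= !mulr1 expr1.
have pow : is_derive y 1 (fun z : R => k * z `^ e) (k * (e * y `^ (e - 1))).
  have -> : (fun z : R => k * z `^ e) = k \*: (fun z => z `^ e) by apply/funext.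
  exact: (is_deriveZ k (is_derive_powR e y0)).
have -> : (fun z => a * z + b * z ^+ 2 + k * z `^ e) =
  (fun z : R => a * z) + (fun z : R => b * z ^+ 2) + (fun z : R => k * z `^ e).
  by apply/funext.
exact: is_deriveD.
Qed.

Lemma le_of_derive_ge0 (F dF : R -> R) s t : s <= t ->
  (forall y, s <= y <= t -> is_derive y 1 F (dF y)) ->
  (forall y, s <= y <= t -> 0 <= dF y) -> F s <= F t.
Proof.
move=> st dF_F dF_ge0.
rewrite -subr_ge0.
have [c cst ->] : exists2 c, c \in `[s, t] & F t - F s = dF c * (t - s).
  apply: MVT_segment st _ _.
    by move=> y; rewrite in_itv /= => /andP[sy yt]; apply: dF_F; rewrite !ltW.
  apply: derivable_within_continuous => y; rewrite in_itv /= => yst.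
  by case: (dF_F y yst).
by rewrite mulr_ge0 ?subr_ge0 // dF_ge0 //; move: cst; rewrite in_itv.
Qed.

Lemma quad_powR_le a b k e s t : 0 < s -> s <= t ->
  (forall y, s <= y <= t -> 0 <= a + b * (2 * y) + k * (e * y `^ (e - 1))) ->
  a * s + b * s ^+ 2 + k * s `^ e <= a * t + b * t ^+ 2 + k * t `^ e.
Proof.
move=> s0 st dF_ge0.
apply: (le_of_derive_ge0 (F := fun z => a * z + b * z ^+ 2 + k * z `^ e)) st _ dF_ge0.
by move=> y /andP[sy _]; apply: is_derive_quad_powR; apply: lt_le_trans sy.
Qed.

Lemma powR_lipschitz g s t : 1 <= g -> 0 < s -> s <= t -> t <= 1 ->
  t `^ g - s `^ g <= g * (t - s).
Proof.
move=> g1 s0 st t1.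
suff : g * s + 0 * s ^+ 2 + -1 * s `^ g <= g * t + 0 * t ^+ 2 + -1 * t `^ g by lra.
apply: quad_powR_le => // y /andP[sy yt].
have y_pos : 0 < y <= 1 by rewrite (lt_le_trans s0 sy) (le_trans yt t1).
have g10 : 0 <= g - 1 by lra.
have := ger_powR y_pos g10; rewrite powRr0 => ?.
nra.
Qed.

(* Second-order Taylor bound for t^a, a >= 2, between points of (0, 1]:
   F y = A y + c y^2 - y^a has a critical point at t0 and, by the Lipschitz
   bound on y^(a-1), a derivative of the sign of y - t0. *)
Lemma powR_taylor a t0 t : 2 <= a -> 0 < t0 <= 1 -> 0 < t <= 1 ->
  t `^ a <= t0 `^ a + a * t0 `^ (a - 1) * (t - t0) + a * (a - 1) / 2 * (t - t0) ^+ 2.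
Proof.
move=> a2 /andP[t0_pos t0_1] /andP[t_pos t1].
set c := a * (a - 1) / 2; set A := a * t0 `^ (a - 1) - 2 * c * t0.
have lip y z : 0 < y -> y <= z -> z <= 1 ->
    a * (z `^ (a - 1) - y `^ (a - 1)) <= 2 * c * (z - y).
  move=> y0 yz z1; have g1 : 1 <= a - 1 by lra.
  by have := powR_lipschitz g1 y0 yz z1; rewrite /c; nra.
suff : A * t0 + c * t0 ^+ 2 + -1 * t0 `^ a <= A * t + c * t ^+ 2 + -1 * t `^ a.
  by rewrite /A; lra.
have [t0t | tt0] := lerP t0 t.
  apply: quad_powR_le => // y /andP[t0y yt].
  by have := lip t0 y t0_pos t0y (le_trans yt t1); rewrite /A; lra.
suff : -A * t + - c * t ^+ 2 + 1 * t `^ a <= -A * t0 + - c * t0 ^+ 2 + 1 * t0 `^ a.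
  by lra.
apply: quad_powR_le (ltW tt0) _ => // y /andP[ty yt0].
by have := lip y t0 (lt_le_trans t_pos ty) yt0 t0_1; rewrite /A; lra.
Qed.

(* For a >= 2, t^a admits at every t0 in [0, 1] a quadratic majorant of
   curvature a(a-1)/2; the endpoint 0, where y^a is not differentiable,
   is treated by hand. *)
Lemma powR_majorant_large a t0 : 2 <= a -> 0 <= t0 <= 1 ->
  quad_majorant (fun t => t `^ a) t0 (a * t0 `^ (a - 1)) (a * (a - 1) / 2).
Proof.
move=> a2 /andP[t0_ge0 t0_1] t /andP[t_ge0 t1].
have c_ge1 : 1 <= a * (a - 1) / 2 by rewrite ler_pdivlMr //; nra.
have le_sqr y : 0 <= y -> y <= 1 -> y `^ a <= y ^+ 2.
  rewrite le_eqVlt => /orP[/eqP <- _|y0 y1].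
    by rewrite powR0 ?expr0n //; lra.
  by rewrite -(powR_mulrn _ (ltW y0)) ger_powR //; apply/andP.
have [a0 a10] : a != 0 /\ a - 1 != 0 by split; apply/eqP; lra.
have [t0_pos|t0_le0] := ltP 0 t0; last first.
  have -> : t0 = 0 by lra.
  rewrite !powR0 // mulr0 mul0r !add0r subr0.
  by have := le_sqr t t_ge0 t1; have := sqr_ge0 t; nra.
have [t_pos|t_le0] := ltP 0 t; last first.
  have -> : t = 0 by lra.
  rewrite powR0 // sub0r sqrrN.
  have e : t0 `^ (a - 1) * t0 = t0 `^ a.
    by rewrite mulrC mulr_powRB1 ?(ltW t0_pos) //; lra.
  have -> : a * t0 `^ (a - 1) * - t0 = - a * t0 `^ a by rewrite -e; ring.
  have := le_sqr t0 (ltW t0_pos) t0_1; rewrite -subr_ge0 => sq.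
  have a1 : 0 <= a - 1 by lra.
  have a12 : 0 <= (a - 1) * (a - 2) by nra.
  have := mulr_ge0 a1 sq; have := mulr_ge0 a12 (sqr_ge0 t0).
  by lra.
by apply: powR_taylor => //; apply/andP.
Qed.

(* Weighted AM-GM (Young's inequality with exponents 1/(a-1), 1/(2-a)). *)
Lemma powR_young a u : 1 < a < 2 -> 0 <= u ->
  u `^ a <= (a - 1) * u ^+ 2 + (2 - a) * u.
Proof.
move=> /andP[a1 a2] u0.
have p0 : 0 < (a - 1)^-1 by rewrite invr_gt0; lra.
have q0 : 0 < (2 - a)^-1 by rewrite invr_gt0; lra.
have pq : ((a - 1)^-1)^-1 + ((2 - a)^-1)^-1 = 1 by rewrite !invrK; ring.
have := conjugate_powR (powR_ge0 u (2 * (a - 1))) (powR_ge0 u (2 - a)) p0 q0 pq.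
rewrite -!powRrM.
have -> : 2 * (a - 1) * (a - 1)^-1 = 2%:R by field; lra.
have -> : (2 - a) * (2 - a)^-1 = 1 by field; lra.
rewrite powR_mulrn // powRr1 // !invrK -powRD; last by apply/implyP => /eqP; lra.
have -> : 2 * (a - 1) + (2 - a) = a by ring.
lra.
Qed.

(* For 1 < a < 2, Young's inequality applied to u = t / t0 and rescaled by
   t0^a is a quadratic majorant of t^a at t0 of curvature (a-1) t0^(a-2). *)
Lemma powR_young_majorant a t0 t : 1 < a < 2 -> 0 < t0 -> 0 <= t ->
  t `^ a <= t0 `^ a + a * t0 `^ (a - 1) * (t - t0)
            + (a - 1) * t0 `^ (a - 2) * (t - t0) ^+ 2.
Proof.
move=> a12 t0_pos t_ge0; set u := t / t0.
have u_ge0 : 0 <= u by rewrite /u divr_ge0 // ltW.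
have tE : t = t0 * u by rewrite /u mulrC divfK ?gt_eqF.
have t0a_pos : 0 < t0 `^ a by rewrite powR_gt0.
have e1 : t0 `^ (a - 1) = t0 `^ a / t0.
  by rewrite powRB ?powRr1 ?ltW //; apply/implyP => _; rewrite gt_eqF.
have e2 : t0 `^ (a - 2) = t0 `^ a / t0 ^+ 2.
  rewrite -(powR_mulrn _ (ltW t0_pos)) powRB //.
  by apply/implyP => _; rewrite gt_eqF.
have := ler_wpM2l (ltW t0a_pos) (powR_young a12 u_ge0).
rewrite e1 e2 {1}tE (powRM _ (ltW t0_pos) u_ge0).
suff -> : t0 `^ a + a * (t0 `^ a / t0) * (t - t0)
    + (a - 1) * (t0 `^ a / t0 ^+ 2) * (t - t0) ^+ 2
    = t0 `^ a * ((a - 1) * u ^+ 2 + (2 - a) * u) by [].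
by rewrite tE; field; rewrite gt_eqF.
Qed.

(* Since y^(a-2) is nonincreasing, any curvature (a-1) q^(a-2) with
   0 < q <= t0 also gives a majorant at t0. *)
Lemma powR_majorant_small a q t0 : 1 < a < 2 -> 0 < q <= t0 ->
  quad_majorant (fun t => t `^ a) t0 (a * t0 `^ (a - 1)) ((a - 1) * q `^ (a - 2)).
Proof.
move=> a12 /andP[q0 qt0] t /andP[t_ge0 _]; have t0_pos := lt_le_trans q0 qt0.
have curv : (a - 1) * t0 `^ (a - 2) <= (a - 1) * q `^ (a - 2).
  rewrite ler_pM2l; last by case/andP: a12; lra.
  rewrite -(opprB 2 a) !powRN lef_pV2 ?posrE ?powR_gt0 //.
  have a2 : 0 <= 2 - a by case/andP: a12; lra.
  have [q_nn t0_nn] : q \is Num.nneg /\ t0 \is Num.nneg by rewrite !nnegrE !ltW.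
  by rewrite ge0_ler_powR.
apply: le_trans (powR_young_majorant a12 t0_pos t_ge0) _.
by rewrite lerD2l ler_wpM2r ?sqr_ge0.
Qed.

(* Concavity of y^s for 0 < s < 1: on [th, 1], y^s lies above its chord.
   This is the convexity of z^(1/s) applied at th^s and 1. *)
Lemma powR_chord s th y : 0 < s < 1 -> 0 < th < 1 -> th <= y <= 1 ->
  (1 - y) / (1 - th) * th `^ s + (1 - (1 - y) / (1 - th)) <= y `^ s.
Proof.
move=> /andP[s0 s1] /andP[th0 th1] /andP[thy y1].
set l := (1 - y) / (1 - th).
have l0 : 0 <= l by rewrite /l divr_ge0 //; lra.
have l1 : l <= 1 by rewrite /l ler_pdivrMr; lra.
have s_inv : 1 <= s^-1 by rewrite invf_ge1 //; lra.
have A0 : th `^ s \in `[0, +oo[%classic by rewrite inE /= in_itv /= powR_ge0.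
have B0 : (1 : R) \in `[0, +oo[%classic by rewrite inE /= in_itv /= ler01.
have := @convex_powR R _ s_inv (Itv01 l0 l1) _ _ A0 B0.
rewrite [X in X `^ _ <= _]convRE [X in _ <= X]convRE /= /unstable.onem.
have th_ge0 := ltW th0.
rewrite -powRrM mulfV ?gt_eqF // powRr1 // powR1 !mulr1.
set X := l * th `^ s + (1 - l) => X_le.
have X0 : 0 <= X.
  by rewrite /X; apply: addr_ge0; [apply: mulr_ge0 => //; apply: powR_ge0 | rewrite subr_ge0].
have X_le_y : X `^ s^-1 <= y.
  by apply: le_trans X_le _; rewrite /l le_eqVlt; apply/orP; left; apply/eqP; field; lra.
have := @ge0_ler_powR R s (ltW s0) _ _ (powR_ge0 X s^-1)
  (le_trans (powR_ge0 X s^-1) X_le_y) X_le_y.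
by rewrite -powRrM mulVf ?gt_eqF // powRr1.
Qed.

(* By the defining equation of theta, the chord of y^(2-a) through theta
   and 1 is the line y |-> 1 - (1 - y)/a. *)
Lemma theta_chord a th y : 1 < a < 2 -> is_theta a th -> th <= y <= 1 ->
  1 - (1 - y) / a <= y `^ (2 - a).
Proof.
move=> /andP[a1 a2] [th01 th_eq] thy.
have s01 : 0 < 2 - a < 1 by apply/andP; lra.
have := powR_chord s01 th01 thy.
rewrite (_ : th `^ (2 - a) = 1 - (1 - th) / a); last by lra.
rewrite (_ : _ + _ = 1 - (1 - y) / a) //.
by field; apply/andP; split; apply/eqP; lra.
Qed.

(* The slope condition for 1 < a < 2 at the points p and q = y p reduces to
   the chord bound for y^(2-a) at y. *)
Lemma slope_gap_of_chord a p y : 1 < a < 2 -> 0 < p -> 0 < y <= 1 ->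
  1 - (1 - y) / a <= y `^ (2 - a) ->
  (a - 1) * (y * p) `^ (a - 2) * (p - y * p)
    <= a * (p `^ (a - 1) - (y * p) `^ (a - 1)).
Proof.
move=> /andP[a1 a2] p_pos /andP[y_pos y1] chord.
set Y := y `^ (2 - a); have Y_pos : 0 < Y by rewrite powR_gt0.
set P := p `^ (a - 2); have P_pos : 0 < P by rewrite powR_gt0.
have pred x : 0 < x -> x `^ (a - 1) = x * x `^ (a - 2).
  move=> x_pos.
  by rewrite (_ : a - 2 = a - 1 - 1) ?mulr_powRB1 ?(ltW x_pos) ?subr_gt0 //; ring.
have yN : y `^ (a - 2) = Y^-1 by rewrite -(opprB 2 a) powRN.
rewrite !powRM ?(ltW y_pos) ?(ltW p_pos) // (pred y) // (pred p) // yN -/P.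
rewrite -subr_ge0 (_ : _ - _ = p * P / Y * (a * (Y - y) - (a - 1) * (1 - y))); last first.
  by field; rewrite gt_eqF.
have p0 := ltW p_pos; have P0 := ltW P_pos; have Y0 := ltW Y_pos.
rewrite mulr_ge0 ?divr_ge0 ?mulr_ge0 //.
have : a * (1 - (1 - y) / a) <= a * Y by rewrite ler_pM2l //; lra.
rewrite (_ : a * (1 - (1 - y) / a) = a - 1 + y); last by field; apply/eqP; lra.
lra.
Qed.

(* The slope condition for 1 < a < 2 and curvature (a-1) q^(a-2): the ratio
   y = q/p of q = (1-rho)/2 to p = (1+rho)/2 lies in [theta, 1] exactly
   when rho <= (1-theta)/(1+theta). *)
Lemma slope_gap_small a th rho : 1 < a < 2 -> is_theta a th ->
  0 <= rho <= (1 - th) / (1 + th) ->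
  (a - 1) * ((1 - rho) / 2) `^ (a - 2) * rho
    <= a * (((1 + rho) / 2) `^ (a - 1) - ((1 - rho) / 2) `^ (a - 1)).
Proof.
move=> a12 hth /andP[r0 r_th]; have [/andP[th0 _] _] := hth.
set p := (1 + rho) / 2; set q := (1 - rho) / 2.
have r_th' : rho * (1 + th) <= 1 - th by rewrite -ler_pdivlMr //; lra.
have p_pos : 0 < p by rewrite /p; lra.
set y := q / p; have qE : q = y * p by rewrite /y divfK ?gt_eqF.
have th_y : th <= y by rewrite /y ler_pdivlMr // /p /q; nra.
have y1 : y <= 1 by rewrite /y ler_pdivrMr // /p /q; lra.
have y_pos := lt_le_trans th0 th_y.
have rE : rho = p - y * p by rewrite -qE /p /q; field.
rewrite qE {1}rE; apply: slope_gap_of_chord => //; first by apply/andP.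
by apply: (theta_chord a12 hth); apply/andP.
Qed.

(* For 2 <= a <= 3, y |-> y^(a-1) - (a-1)/2 y^2 is nondecreasing on [0, 1]:
   its derivative is (a-1) (y^(a-2) - y) and a - 2 <= 1. *)
Lemma powR_sqr_gap a q p : 2 <= a <= 3 -> 0 <= q <= p -> 0 < p <= 1 ->
  (a - 1) / 2 * (p ^+ 2 - q ^+ 2) <= p `^ (a - 1) - q `^ (a - 1).
Proof.
move=> /andP[a2 a3] /andP[q0 qp] /andP[p_pos p1].
have a1 : 0 <= a - 1 by lra.
have [q_pos|q_le0] := ltP 0 q; last first.
  have -> : q = 0 by lra.
  rewrite powR0 ?expr0n ?subr0 /=; last by apply/eqP; lra.
  have e2 : a - 1 <= 2%:R by lra.
  have := ger_powR (introT andP (conj p_pos p1)) e2.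
  rewrite (powR_mulrn _ (ltW p_pos)).
  by have := sqr_ge0 p; nra.
suff : 0 * q + - ((a - 1) / 2) * q ^+ 2 + 1 * q `^ (a - 1)
    <= 0 * p + - ((a - 1) / 2) * p ^+ 2 + 1 * p `^ (a - 1) by lra.
apply: quad_powR_le => // y /andP[qy yp].
have y_pos := lt_le_trans q_pos qy.
have e1 : a - 1 - 1 <= 1 by lra.
have := ger_powR (introT andP (conj y_pos (le_trans yp p1))) e1.
rewrite (powRr1 (ltW y_pos)) -subr_ge0 => /(mulr_ge0 a1).
lra.
Qed.

(* The slope condition for 2 <= a <= 3 and curvature a(a-1)/2, using
   p^2 - q^2 = rho. *)
Lemma slope_gap_large a rho : 2 <= a <= 3 -> 0 <= rho <= 1 ->
  a * (a - 1) / 2 * rho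
    <= a * (((1 + rho) / 2) `^ (a - 1) - ((1 - rho) / 2) `^ (a - 1)).
Proof.
move=> a23 /andP[r0 r1].
have qp : 0 <= (1 - rho) / 2 <= (1 + rho) / 2 by apply/andP; lra.
have p01 : 0 < (1 + rho) / 2 <= 1 by apply/andP; lra.
have := powR_sqr_gap a23 qp p01.
rewrite (_ : _ ^+ 2 - _ ^+ 2 = rho); last by field.
have a0 : 0 <= a by case/andP: a23; lra.
by move=> /(ler_wpM2l a0); lra.
Qed.
End PowerInequalities.

Definition admissible_curvature (R : realType) (a rho c : R) : Prop :=
  [/\ 0 <= c,
      c * rho <= a * (((1 + rho) / 2) `^ (a - 1) - ((1 - rho) / 2) `^ (a - 1)),
      quad_majorant (fun t => t `^ a) ((1 + rho) / 2) (a * ((1 + rho) / 2) `^ (a - 1)) c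
    & quad_majorant (fun t => t `^ a) ((1 - rho) / 2) (a * ((1 - rho) / 2) `^ (a - 1)) c].

Section DictatorsMaximiseStability.
Variable R : realType.
Implicit Types a rho c th : R.

Lemma admissible_small_alpha a rho th : 1 < a < 2 -> is_theta a th ->
  0 <= rho <= (1 - th) / (1 + th) ->
  admissible_curvature a rho ((a - 1) * ((1 - rho) / 2) `^ (a - 2)).
Proof.
move=> a12 hth r_th; have [/andP[th0 _] _] := hth; have /andP[r0 r_th'] := r_th.
have r1 : rho < 1 by apply: le_lt_trans r_th' _; rewrite ltr_pdivrMr; lra.
have q_pos : 0 < (1 - rho) / 2 by lra.
split; first by rewrite mulr_ge0 ?powR_ge0 //; case/andP: a12; lra.
- exact: slope_gap_small a12 hth r_th.
- by apply: powR_majorant_small => //; apply/andP; split; lra.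
- by apply: powR_majorant_small => //; apply/andP.
Qed.

Lemma admissible_large_alpha a rho : 2 <= a <= 3 -> 0 <= rho <= 1 ->
  admissible_curvature a rho (a * (a - 1) / 2).
Proof.
move=> a23 r01; have /andP[a2 _] := a23; have /andP[r0 r1] := r01.
split; first by rewrite divr_ge0 // mulr_ge0 //; lra.
- exact: slope_gap_large.
- by apply: powR_majorant_large => //; apply/andP; lra.
- by apply: powR_majorant_large => //; apply/andP; lra.
Qed.

Lemma Phi_powR a t : 1 < a -> 0 <= t -> Phi a t = (t `^ a - t) / (a - 1).
Proof. by move=> a1 t0; rewrite /Phi mulrBr mulr1 mulr_powRB1 //; lra. Qed.

Lemma Phi_majorant a t0 s c : 1 < a -> 0 <= t0 ->
  quad_majorant (fun t => t `^ a) t0 s c ->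
  quad_majorant (Phi a) t0 ((s - 1) / (a - 1)) (c / (a - 1)).
Proof.
move=> a1 t0_ge0 maj t t01; have /andP[t_ge0 _] := t01.
have a1_pos : 0 < a - 1 by rewrite subr_gt0.
have -> : Phi a t0 + (s - 1) / (a - 1) * (t - t0) + c / (a - 1) * (t - t0) ^+ 2
    = (t0 `^ a + s * (t - t0) + c * (t - t0) ^+ 2 - t) / (a - 1).
  by rewrite Phi_powR //; field; rewrite gt_eqF.
by rewrite Phi_powR // ler_pM2r ?invr_gt0 // lerD2r; apply: maj.
Qed.

Lemma Phi_dictator_bound n a rho c (f : cube n -> bool) :
  1 < a -> 0 <= rho <= 1 -> admissible_curvature a rho c ->
  Eunif (fun x => bval R (f x)) = 1 / 2 ->
  Eunif (fun x => Phi a (T_rho rho f x))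
    <= 1 / 2 * Phi a ((1 + rho) / 2) + 1 / 2 * Phi a ((1 - rho) / 2).
Proof.
move=> a1 r01 [c0 gap maj_p maj_q]; have /andP[r0 r1] := r01.
have a1_pos : 0 < a - 1 by rewrite subr_gt0.
apply: dictator_bound r01 _ _ (Phi_majorant a1 _ maj_p) (Phi_majorant a1 _ maj_q).
- by rewrite divr_ge0 // ltW.
- by rewrite -mulrBl mulrAC ler_pM2r ?invr_gt0 //; lra.
- by rewrite divr_ge0 //; lra.
- by rewrite divr_ge0 //; lra.
Qed.
End DictatorsMaximiseStability.

Theorem corollary2p7 (R : realType) (n : nat) (rho alpha : R) :
  (1 <= n)%N ->
  ((1 < alpha < 2 /\ 0 <= rho /\
      (exists theta, is_theta alpha theta /\ rho <= (1 - theta) / (1 + theta)))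
   \/ (2 <= alpha <= 3 /\ 0 <= rho <= 1)) ->
  forall f : cube n -> bool,
    Eunif (fun x => bval R (f x)) = 1 / 2 ->
    Eunif (fun x => Phi alpha (T_rho rho f x))
      <= 1 / 2 * Phi alpha ((1 + rho) / 2) + 1 / 2 * Phi alpha ((1 - rho) / 2).
Proof.
move=> _ hyp f hmean.
have [a1 r01 [c adm]] :
    [/\ 1 < alpha, 0 <= rho <= 1 & exists c, admissible_curvature alpha rho c].
  case: hyp => [[a12 [r0 [th [hth r_th]]]] | [a23 r01]].
  - have [/andP[th0 _] _] := hth.
    have r1 : rho <= 1 by apply: le_trans r_th _; rewrite ler_pdivrMr; lra.
    split; first by case/andP: a12.
    + by apply/andP.
    + by eexists; apply: admissible_small_alpha a12 hth _; apply/andP.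
  - split; first by case/andP: a23; lra.
    + exact: r01.
    + by eexists; apply: admissible_large_alpha.
exact: Phi_dictator_bound a1 r01 adm hmean.
Qed.
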